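(* Let $\mathcal{A}$ be the family of all Lebesgue-measurable subsets $A\subseteq(0,\infty)$ with $\lambda(A)\le\sqrt{\inf A}$. For measurable $f:(0,\infty)\to[0,\infty]$ set $\rho_Y(f)=\sup_{A\in\mathcal{A}}\int_A f(t)\,dt$. Then $\rho_Y$ is a function norm, the function space $Y$ it generates is a Banach space, and $Y$ is not essentially subrearrangement-invariant.
   Context: $\lambda$ is Lebesgue measure on $(0,\infty)$, with its usual order. A function norm on $(0,\infty)$ is a map $\rho$ from nonnegative measurable functions into $[0,\infty]$ that is subadditive, positively homogeneous, and vanishes exactly on functions that are $0$ a.e.; the function space consists of a.e.-classes of measurable $f:(0,\infty)\to[-\infty,\infty]$ with $\|f\|:=\rho(|f|)<\infty$. $\mathbb{MO}(E,F)$ is the set of strictly increasing bijections $m:E\to F$ such that $m$ and $m^{-1}$ are measure-preserving (preimages of measurable sets are measurable of equal measure). A function space $X$ on $(0,\infty)$ is subrearrangement-invariant if $\|f\circ m\|_X=\|f\mathbf{1}_F\|_X$ for every measurable $F\subseteq(0,\infty)$, every $m\in\mathbb{MO}((0,\infty),F)$ and every $f\in X$; it is essentially subrearrangement-invariant if it admits an equivalent subrearrangement-invariant norm. *)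

From HB Require Import structures.
From mathcomp Require Import all_boot all_order all_algebra.
From mathcomp Require Import all_classical all_reals all_analysis measurable_realfun.
Set Implicit Arguments. Unset Strict Implicit. Unset Printing Implicit Defensive.
Import Order.TTheory GRing.Theory Num.Theory.
Local Open Scope classical_set_scope.
Local Open Scope ring_scope.

(* The real line equipped with the Lebesgue (i.e. completed, Caratheodory)
   sigma-algebra; definitionally this is R. *)
Definition LR (R : realType) : measurableType _ :=
  caratheodory_type (@wlength R idfun)^*%mu.

Section Defs.
Context {R : realType}.
Local Notation T := (LR R).
Local Open Scope ereal_scope.

Definition toR (x : T) : R := x.

Definition lam : set T -> \bar R := @completed_lebesgue_measure R.

Definition pos : set T := [set x | (0 < toR x)%R].

(* Functions on (0,oo) are represented by functions T -> \bar R vanishing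
   outside (0,oo). *)
Definition supported (f : T -> \bar R) : Prop := forall x, ~ pos x -> f x = 0.

Definition nnmf (f : T -> \bar R) : Prop :=
  [/\ measurable_fun pos f, (forall x, pos x -> 0 <= f x) & supported f].

Definition absf (f : T -> \bar R) : T -> \bar R := fun x => `|f x|.

Definition function_norm (rho : (T -> \bar R) -> \bar R) : Prop :=
  [/\ (forall f, nnmf f -> 0 <= rho f),
      (forall f g, nnmf f -> nnmf g -> rho (fun x => f x + g x) <= rho f + rho g),
      (forall (a : R) f, (0 <= a)%R -> nnmf f ->
          rho (fun x => a%:E * f x) = a%:E * rho f) &
      (forall f, nnmf f -> (rho f = 0 <-> {ae lam, forall x, pos x -> f x = 0}))].

(* membership in the function space generated by rho; its norm is rho (absf f) *)
Definition in_space (rho : (T -> \bar R) -> \bar R) (f : T -> \bar R) : Prop :=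
  [/\ measurable_fun pos f, supported f & rho (absf f) < +oo].

Definition banach (rho : (T -> \bar R) -> \bar R) : Prop :=
  forall u : nat -> T -> \bar R, (forall n, in_space rho (u n)) ->
  (forall e : R, (0 < e)%R -> exists N : nat, forall m n : nat, (N <= m)%N -> (N <= n)%N ->
      rho (absf (fun x => u n x - u m x)) <= e%:E) ->
  exists f, in_space rho f /\
    (forall e : R, (0 < e)%R -> exists N : nat, forall n : nat, (N <= n)%N ->
      rho (absf (fun x => u n x - f x)) <= e%:E).

Definition MO (F : set T) (m : T -> T) : Prop :=
  [/\ set_bij pos F m,
      (forall x y, pos x -> pos y -> (toR x < toR y)%R -> (toR (m x) < toR (m y))%R),
      (forall B, measurable B -> B `<=` F ->
          measurable (pos `&` m @^-1` B) /\ lam (pos `&` m @^-1` B) = lam B) &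
      (forall B, measurable B -> B `<=` pos ->
          measurable (m @` B) /\ lam (m @` B) = lam B)].

Definition subRI (sigma : (T -> \bar R) -> \bar R) : Prop :=
  forall (F : set T) (m : T -> T) (f : T -> \bar R),
    measurable F -> F `<=` pos -> MO F m -> in_space sigma f ->
    sigma (absf (fun x => if `[< pos x >] then f (m x) else 0)) =
    sigma (absf (fun x => if `[< F x >] then f x else 0)).

Definition ess_subRI (rho : (T -> \bar R) -> \bar R) : Prop :=
  exists sigma : (T -> \bar R) -> \bar R,
    [/\ function_norm sigma,
        (exists c C : R, [/\ (0 < c)%R, (0 < C)%R &
           forall f, nnmf f -> c%:E * rho f <= sigma f /\ sigma f <= C%:E * rho f]) &
        subRI sigma].

Definition famA (A : set T) : Prop :=
  [/\ measurable A, A `<=` pos & lam A <= (Num.sqrt (inf (toR @` A)))%:E].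

Definition rhoY (f : T -> \bar R) : \bar R :=
  ereal_sup [set \int[lam]_(x in A) f x | A in famA].

End Defs.

(* rho_Y is a supremum of integrals over the sets of the family A, so positivity,
   homogeneity and subadditivity come from the integral.  The intervals
   ](k+2)^-1, (k+1)^-1] and [k+1, k+2[ belong to A and cover (0,oo); hence rho_Y f = 0
   forces f = 0 a.e., and rho_Y f < oo forces f to be finite a.e.  Completeness is the
   Riesz-Fischer argument: along a fast Cauchy subsequence the sum of the increments has
   rho_Y at most 1, so the subsequence converges a.e., and Fatou's lemma on each set of A
   bounds the distance to the limit.
   Translation by a = b^2 maps (0,oo) measure-preservingly onto (a,oo) and sends the
   indicator of ]a, a + b] to that of ]0, b].  The first interval belongs to A, so its
   indicator has rho_Y equal to b, whereas every set of A meeting ]0, b] has measure at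
   most sqrt b.  A subrearrangement-invariant norm equivalent to rho_Y with constants
   c, C would therefore give c b <= C sqrt b for every b > 0. *)

From HB Require Import structures.
From mathcomp Require Import all_boot all_order all_algebra.
From mathcomp Require Import all_classical all_reals all_analysis measurable_realfun.
From mathcomp Require Import ring.
Set Implicit Arguments. Unset Strict Implicit. Unset Printing Implicit Defensive.
Import Order.TTheory GRing.Theory Num.Theory numFieldNormedType.Exports.
Local Open Scope classical_set_scope.
Local Open Scope ring_scope.

Section translation_invariance.
Context {R : realType}.
Local Notation mu := (@wlength R idfun)^*%mu.

Lemma image_shift_itv_oc (a x y : R) :
  shift a @` `]x, y]%classic = `]x + a, y + a]%classic.
Proof.
apply/seteqP; split => z /=.
  by move=> [w /=]; rewrite !in_itv /= => /andP[h1 h2] <-; rewrite ltrD2r lerD2r h1 h2.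
rewrite in_itv /= => /andP[h1 h2]; exists (z - a); last by rewrite /= subrK.
by rewrite /= in_itv /= ltrBrDr lerBlDr h1 h2.
Qed.

Lemma image_shift (a : R) (C : set R) : shift a @` C = center a @^-1` C.
Proof.
apply/seteqP; split => z /=; first by move=> [w Cw <-]; rewrite /= addrK.
by move=> Cz; exists (z - a) => //=; rewrite subrK.
Qed.

Lemma preimage_shiftK (a : R) (C : set R) : shift a @^-1` (center a @^-1` C) = C.
Proof. by apply/seteqP; split => z; rewrite /= addrK. Qed.

Local Open Scope ereal_scope.

Lemma wlength_image_shift (a x y : R) :
  wlength idfun (shift a @` `]x, y]%classic) = wlength idfun `]x, y]%classic.
Proof.
rewrite image_shift_itv_oc !wlength_itv /= !lte_fin ltrD2r; case: ifP => // _.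
by rewrite -!EFinB opprD addrACA subrr addr0.
Qed.

Lemma outer_measure_image_shift_le (a : R) (S : set R) : mu (shift a @` S) <= mu S.
Proof.
apply: le_ereal_inf_tmp => _ [A [mA SA] <-].
have itvA k : exists p : R * R, A k = `]p.1, p.2]%classic.
  by have [[x y] _ <-] := mA k; exists (x, y).
pose p k := projT1 (cid (itvA k)).
have Ap k : A k = `](p k).1, (p k).2]%classic by rewrite /p; case: cid.
apply: ereal_inf_lbound; exists (fun k => shift a @` A k).
  split; first by move=> k; rewrite Ap image_shift_itv_oc; exact: is_ocitv.
  by move=> _ [z /SA [k _ Akz] <-]; exists k => //; exists z.
by apply: eq_eseriesr => k _; rewrite Ap wlength_image_shift.
Qed.

Lemma outer_measure_preimage_shift (a : R) (C : set R) : mu (shift a @^-1` C) = mu C.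
Proof.
apply/eqP; rewrite eq_le; apply/andP; split.
  by have := outer_measure_image_shift_le (- a) C; rewrite image_shift opprK.
have := outer_measure_image_shift_le a (shift a @^-1` C).
by rewrite image_shift -{2}(opprK a) preimage_shiftK.
Qed.

Lemma caratheodory_preimage_shift (a : R) (B : set R) :
  mu.-caratheodory B -> mu.-caratheodory (shift a @^-1` B).
Proof.
move=> cB X; rewrite -{1}(preimage_shiftK a X) outer_measure_preimage_shift cB.
by rewrite -(outer_measure_preimage_shift a (_ `&` B))
  -(outer_measure_preimage_shift a (_ `&` ~` B)) !preimage_setI preimage_shiftK.
Qed.

End translation_invariance.

Section rhoY_basics.
Context {R : realType}.
Local Notation T := (LR R).
Local Open Scope ereal_scope.

Lemma lam_preimage_shift (a : R) (B : set T) : lam (shift a @^-1` B) = lam B.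
Proof. exact: outer_measure_preimage_shift. Qed.

Lemma measurable_preimage_shift (a : R) (B : set T) :
  measurable B -> measurable (shift a @^-1` B : set T).
Proof. exact: caratheodory_preimage_shift. Qed.

Lemma measurable_LR (E : set R) : measurable E -> measurable (E : set T).
Proof. exact: sub_caratheodory. Qed.

Lemma lam_itv_oc (x y : R) : (x <= y)%R -> lam (`]x, y]%classic : set T) = (y - x)%:E.
Proof.
move=> xy; rewrite [LHS](_ : _ = lebesgue_measure (`]x, y]%classic : set R))//.
rewrite lebesgue_measure_itv /= lte_fin.
by case: ltP => // yx; rewrite (@le_anti _ _ y x) ?subrr ?yx.
Qed.

Lemma measurable_pos : measurable (pos : set T).
Proof.
have -> : (pos : set T) = (`]0%R, +oo[%classic : set R).
  by apply/seteqP; split => x; rewrite /pos /= in_itv /= andbT.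
by apply: measurable_LR; exact: measurable_itv.
Qed.

Lemma rhoY_ub (f : T -> \bar R) A : famA A -> \int[lam]_(x in A) f x <= rhoY f.
Proof. by move=> hA; apply: ereal_sup_ubound; exists A. Qed.

Lemma rhoY_lub (f : T -> \bar R) M :
  (forall A, famA A -> \int[lam]_(x in A) f x <= M) -> rhoY f <= M.
Proof. by move=> h; apply: ge_ereal_sup => _ [A hA <-]; exact: h. Qed.

Lemma famA0 : famA (set0 : set T).
Proof. by split => //; rewrite /lam measure0 lee_fin sqrtr_ge0. Qed.

Lemma rhoY_ge0 (f : T -> \bar R) : 0 <= rhoY f.
Proof. by rewrite -(integral_set0 lam f); exact: rhoY_ub famA0. Qed.

Lemma famA_lb (A : set T) (x : R) : measurable A -> (0 < x)%R ->
  A `<=` [set y | (x <= toR y)%R] -> lam A <= (Num.sqrt x)%:E -> famA A.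
Proof.
move=> mA x0 Ax lamA; split => //.
  by move=> y /Ax /= xy; rewrite /pos /=; exact: lt_le_trans xy.
have [->|/set0P[y Ay]] := eqVneq A set0; first by rewrite /lam measure0 lee_fin sqrtr_ge0.
apply: (le_trans lamA); rewrite lee_fin ler_sqrt//; apply: lb_le_inf.
- by exists (toR y), y.
- by move=> _ [z /Ax zx <-].
- by exists (toR y), y.
- by move=> _ [z /Ax zx <-]; rewrite (le_trans (ltW x0) zx).
Qed.

Lemma famA_lam_le (A : set T) y : famA A -> A y -> lam A <= (Num.sqrt (toR y))%:E.
Proof.
move=> [mA Apos lamA] Ay; have y0 : (0 <= toR y)%R by exact/ltW/Apos.
apply: (le_trans lamA); rewrite lee_fin ler_sqrt//.
apply: ge_inf; last by exists y.
by exists 0%R => _ [z /Apos /ltW z0 <-].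
Qed.

Lemma nnmf_famA (f : T -> \bar R) A : nnmf f -> famA A ->
  measurable_fun A f /\ (forall x, A x -> 0 <= f x).
Proof.
move=> [mf f0 _] [mA Apos _]; split; first exact: measurable_funS measurable_pos Apos mf.
by move=> x /Apos; exact: f0.
Qed.

End rhoY_basics.

Section null_functions.
Context {R : realType}.
Local Notation T := (LR R).

Definition itv_recip (k : nat) : set T := `](k.+2%:R)^-1, (k.+1%:R)^-1]%classic.
Definition itv_nat (k : nat) : set T := `[k.+1%:R, k.+2%:R[%classic.

Lemma pos_cover (y : T) : pos y -> (exists k, itv_recip k y) \/ (exists k, itv_nat k y).
Proof.
rewrite /pos /toR => y0; have [y1|y1] := leP y 1.
  left; set z := y^-1.
  have z1 : 1 <= z by rewrite /z invr_ge1 ?unitf_gt0.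
  have := truncn_itv (le_trans ler01 z1); have := truncn_gt0 z; rewrite z1.
  case: (Num.truncn z) => // k _ /andP[kz zk]; exists k.
  rewrite /itv_recip /= in_itv /= -(invrK y) -/z.
  by rewrite ltf_pV2 ?lef_pV2 ?posrE ?invr_gt0 ?zk ?(lt_le_trans ltr01 z1).
right; have := truncn_itv (ltW y0); have := truncn_gt0 y; rewrite (ltW y1).
by case: (Num.truncn y) => // k _ /andP[ky yk]; exists k; rewrite /itv_nat /= in_itv /= ky yk.
Qed.

Lemma ler_sqrt_id (x : R) : 0 <= x -> x <= 1 -> x <= Num.sqrt x.
Proof.
move=> x0 x1; rewrite -{1}(sqr_sqrtr x0) expr2.
by apply: ler_piMr; rewrite ?sqrtr_ge0// -sqrtr1 ler_sqrt.
Qed.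

Local Open Scope ereal_scope.

Lemma famA_itv_recip k : famA (itv_recip k).
Proof.
rewrite /itv_recip; set p : R := k.+1%:R; set q : R := k.+2%:R.
have p0 : (0 < p)%R by rewrite ltr0n.
have q0 : (0 < q)%R by rewrite ltr0n.
have qp : q = (p + 1)%R by rewrite /p /q -natr1.
apply: (@famA_lb _ _ q^-1).
- by apply: measurable_LR; exact: measurable_itv.
- by rewrite invr_gt0.
- by move=> y; rewrite /= in_itv /= => /andP[/ltW].
rewrite lam_itv_oc; last by rewrite lef_pV2 ?posrE// qp lerDl.
have -> : (p^-1 - q^-1 = (p * q)^-1)%R.
  by rewrite qp; field; rewrite nat1r natr1 !pnatr_eq0.
rewrite lee_fin; apply: (le_trans _ (ler_sqrt_id _ _)).
- by rewrite lef_pV2 ?posrE ?mulr_gt0// ler_peMl// ?ler1n// ltW.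
- by rewrite invr_ge0 ltW.
- by rewrite invr_le1 ?unitf_gt0// qp lerDr ltW.
Qed.

Lemma famA_itv_nat k : famA (itv_nat k).
Proof.
apply: (@famA_lb _ _ k.+1%:R).
- by apply: measurable_LR; exact: measurable_itv.
- by rewrite ltr0n.
- by move=> y; rewrite /itv_nat /= in_itv /= => /andP[].
rewrite [X in X <= _](_ : _ = lebesgue_measure (`[k.+1%:R, k.+2%:R[%classic : set R))//.
rewrite lebesgue_measure_itv /= lte_fin ltr_nat ltnS leqnn.
by rewrite -EFinD lee_fin -natrB // subSnn -{1}sqrtr1 ler_sqrt ?ler1n.
Qed.

Lemma negligible_pos_famA (P : set T) :
  (forall A, famA A -> lam.-negligible (A `&` P)) -> lam.-negligible (pos `&` P).
Proof.
move=> nP; apply: (@negligibleS _ _ _ lam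
  ((\bigcup_k (itv_recip k `&` P)) `|` (\bigcup_k (itv_nat k `&` P)))).
  by move=> y [/pos_cover [[k ?]|[k ?]] Py]; [left|right]; exists k.
by apply: negligibleU; apply: negligible_bigcup => k; apply: nP;
  [exact: famA_itv_recip|exact: famA_itv_nat].
Qed.

End null_functions.

Section function_norm.
Context {R : realType}.
Local Notation T := (LR R).
Local Open Scope ereal_scope.

Lemma rhoYD_le (f g : T -> \bar R) : nnmf f -> nnmf g ->
  rhoY (fun x => f x + g x) <= rhoY f + rhoY g.
Proof.
move=> nf ng; apply: rhoY_lub => A hA.
have [[mfA f0] [mgA g0]] := (nnmf_famA nf hA, nnmf_famA ng hA); have [mA _ _] := hA.
by rewrite ge0_integralD//; apply: leeD; exact: rhoY_ub.
Qed.

Lemma rhoYZ (a : R) (f : T -> \bar R) : (0 <= a)%R -> nnmf f ->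
  rhoY (fun x => a%:E * f x) = a%:E * rhoY f.
Proof.
move=> a0 nf; rewrite /rhoY -ereal_supZl//; last first.
  by apply/set0P; exists (\int[lam]_(x in set0) f x), set0 => //; exact: famA0.
rewrite image_comp; congr ereal_sup; apply: eq_imagel => A hA /=.
have [mfA f0] := nnmf_famA nf hA; have [mA _ _] := hA.
by rewrite ge0_integralZl// lee_fin.
Qed.

Lemma rhoY_eq0 (f : T -> \bar R) : nnmf f ->
  rhoY f = 0 <-> {ae lam, forall x, pos x -> f x = 0}.
Proof.
move=> nf; split => [rho0|f0ae].
  have : lam.-negligible (pos `&` [set x | f x <> 0]).
    apply: negligible_pos_famA => A hA.
    have [mfA f0] := nnmf_famA nf hA; have [mA _ _] := hA.
    have intf0 : \int[lam]_(x in A) `|f x| = 0.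
      apply/eqP; rewrite eq_le integral_ge0 ?andbT // -rho0.
      by rewrite (eq_integral f) ?rhoY_ub // => x /[!inE] Ax; rewrite gee0_abs ?f0.
    have [N [mN N0 fN]] := (ae_eq_integral_abs lam mA mfA).1 intf0.
    by exists N; split => // x [Ax fx]; apply: fN => /= /(_ Ax).
  by apply: negligibleS => x /= /not_implyP.
apply/eqP; rewrite eq_le rhoY_ge0 andbT; apply: rhoY_lub => A hA.
have [mfA f0] := nnmf_famA nf hA; have [mA Apos _] := hA.
rewrite (@ae_eq_integral _ _ _ lam A (cst 0) f mA mfA) ?integral0//.
by move: f0ae; apply: filterS => x fx Ax; exact: fx (Apos _ Ax).
Qed.

Lemma rhoY_function_norm : function_norm (@rhoY R).
Proof.
split; [by move=> f _; exact: rhoY_ge0 | exact: rhoYD_le | exact: rhoYZ |].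
exact: rhoY_eq0.
Qed.

End function_norm.

Section indicators.
Context {R : realType}.
Local Notation T := (LR R).
Local Open Scope ereal_scope.

Definition ind (I : set T) : T -> \bar R := fun x => (\1_I x)%:E.

Lemma ind_nnmf (I : set T) : measurable I -> I `<=` pos -> nnmf (ind I).
Proof.
move=> mI Ipos; split.
- by apply/measurable_EFinP; exact: measurable_indic.
- by move=> x _; rewrite lee_fin indicE ler0n.
- by move=> x npx; rewrite /ind indicE memNset // => /Ipos.
Qed.

Lemma absf_ind (I : set T) : absf (ind I) = ind I.
Proof. by apply/funext => x; rewrite /absf gee0_abs// lee_fin indicE ler0n. Qed.

Lemma integral_ind (I A : set T) : measurable I -> measurable A ->
  \int[lam]_(x in A) ind I x = lam (I `&` A).
Proof. by move=> mI mA; rewrite integral_indic. Qed.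

Lemma famA_rhoY_ind (I : set T) : famA I -> rhoY (ind I) = lam I.
Proof.
move=> famI; have [mI _ _] := famI; apply/eqP; rewrite eq_le; apply/andP; split.
  apply: rhoY_lub => A [mA _ _]; rewrite integral_ind//.
  by apply: le_measure; rewrite ?inE; [exact: measurableI | exact: mI | exact: subIsetl].
by rewrite -{1}(setIid I) -integral_ind//; exact: rhoY_ub.
Qed.

Lemma rhoY_ind_itv0_le (b : R) : (0 <= b)%R ->
  rhoY (ind (`]0%R, b]%classic : set T)) <= (Num.sqrt b)%:E.
Proof.
move=> b0; apply: rhoY_lub => A famA_A; have [mA _ _] := famA_A.
have mJ : measurable (`]0%R, b]%classic : set T).
  by apply: measurable_LR; exact: measurable_itv.
rewrite integral_ind//; set JA := _ `&` A.
have [->|/set0P[y [Jy Ay]]] := eqVneq JA set0; first by rewrite /lam measure0 lee_fin sqrtr_ge0.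
apply: (le_trans (le_measure _ _ _ (@subIsetr _ _ A))); rewrite ?inE//.
  exact: measurableI.
apply: (le_trans (famA_lam_le famA_A Ay)); rewrite lee_fin ler_sqrt//.
by move: Jy; rewrite /= in_itv /= => /andP[].
Qed.

Lemma famA_itv_oc_sqr (b : R) : (0 < b)%R ->
  famA (`](b ^+ 2)%R, (b ^+ 2 + b)%R]%classic : set T).
Proof.
move=> b0; apply: (@famA_lb _ _ (b ^+ 2)%R).
- by apply: measurable_LR; exact: measurable_itv.
- exact: exprn_gt0.
- by move=> x; rewrite /= in_itv /= => /andP[/ltW].
by rewrite lam_itv_oc ?lerDl ?(ltW b0)// addrAC subrr add0r sqrtr_sqr gtr0_norm.
Qed.

Lemma MO_shift (a : R) : MO (`]a, +oo[%classic : set T) (shift a).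
Proof.
split.
- split.
  + by move=> x; rewrite /pos /= in_itv /= andbT ltrDr.
  + by move=> x y _ _ /addIr.
  + move=> y; rewrite /= in_itv /= andbT => ay; exists (y - a)%R.
      by rewrite /pos /= subr_gt0.
    by rewrite /= subrK.
- by move=> x y _ _; rewrite /toR /= ltrD2r.
- move=> B mB BF.
  have -> : pos `&` shift a @^-1` B = shift a @^-1` B.
    apply/seteqP; split => [x [] //|x Bx]; split => //.
    by have := BF _ Bx; rewrite /pos /= in_itv /= andbT ltrDr.
  by split; [exact: measurable_preimage_shift | exact: lam_preimage_shift].
- by move=> B mB _; rewrite image_shift; split;
    [exact: measurable_preimage_shift | exact: lam_preimage_shift].
Qed.

Lemma restrict_ind_shift (a b : R) :
  (fun x => if `[< pos x >] then ind (`]a, (a + b)%R]%classic : set T) (shift a x) else 0)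
  = ind (`]0%R, b]%classic : set T).
Proof.
apply/funext => x; rewrite /ind !indicE; case: asboolP => [x0|x0].
  by rewrite !mem_setE /= !in_itv /= ltrDr [(a + b)%R]addrC lerD2r x0.
by rewrite memNset // => /andP[].
Qed.

Lemma restrict_ind_sub (F I : set T) : I `<=` F ->
  (fun x => if `[< F x >] then ind I x else 0) = ind I.
Proof.
move=> IF; apply/funext => x; case: asboolP => // Fx.
by rewrite /ind indicE memNset // => /IF.
Qed.

End indicators.

Section not_ess_subRI.
Context {R : realType}.
Local Notation T := (LR R).

Lemma ess_subRI_rhoY_sqrt_bound : ess_subRI (@rhoY R) ->
  exists c C : R, 0 < c /\ forall b, 0 < b -> c * b <= C * Num.sqrt b.
Proof.
move=> [sigma [_ [c [C [c0 C0 equiv]]] subRI_sigma]]; exists c, C; split => // b b0.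
set a := b ^+ 2; have a0 : 0 <= a by exact: sqr_ge0.
pose I : set T := `]a, a + b]%classic.
pose J : set T := `]0, b]%classic.
pose F : set T := `]a, +oo[%classic.
have mI : measurable I by apply: measurable_LR; exact: measurable_itv.
have mJ : measurable J by apply: measurable_LR; exact: measurable_itv.
have mF : measurable F by apply: measurable_LR; exact: measurable_itv.
have Fpos : F `<=` pos.
  by move=> x; rewrite /F /= in_itv /= andbT => /(le_lt_trans a0).
have IF : I `<=` F by move=> x; rewrite /I /F /= !in_itv /= andbT => /andP[].
have Jpos : J `<=` pos by move=> x; rewrite /J /= in_itv /= => /andP[].
have nI := ind_nnmf mI (subset_trans IF Fpos); have nJ := ind_nnmf mJ Jpos.
have rhoI : rhoY (ind I) = b%:E.
  rewrite famA_rhoY_ind; last exact: famA_itv_oc_sqr.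
  by rewrite (@lam_itv_oc _ a (a + b)) ?lerDl ?(ltW b0)// addrAC subrr add0r.
have inI : in_space sigma (ind I).
  split; [by case: nI | by case: nI |].
  rewrite absf_ind; apply: (le_lt_trans (equiv _ nI).2).
  by rewrite rhoI -EFinM ltry.
have sigmaIJ : sigma (ind I) = sigma (ind J).
  have := subRI_sigma _ _ _ mF Fpos (MO_shift a) inI.
  by rewrite restrict_ind_shift restrict_ind_sub // !absf_ind.
rewrite -lee_fin !EFinM -rhoI; apply: (le_trans (equiv _ nI).1).
rewrite sigmaIJ; apply: (le_trans (equiv _ nJ).2).
by rewrite lee_wpmul2l ?lee_fin ?(ltW C0) ?rhoY_ind_itv0_le ?(ltW b0).
Qed.

Lemma linear_not_dominated_by_sqrt (c C : R) : 0 < c ->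
  ~ (forall b, 0 < b -> c * b <= C * Num.sqrt b).
Proof.
move=> c0 bound; set s := `|C| / c + 1.
have s0 : 0 < s by rewrite ltr_wpDl ?divr_ge0 ?normr_ge0 ?ltW.
have := bound (s ^+ 2) (exprn_gt0 2 s0); rewrite sqrtr_sqr gtr0_norm //.
apply/negP; rewrite -ltNge expr2 mulrA ltr_pM2r //.
have -> : c * s = `|C| + c by rewrite /s mulrDr mulr1 mulrCA divff ?mulr1 ?gt_eqF.
by rewrite (le_lt_trans (ler_norm C)) // ltrDl.
Qed.

Lemma not_ess_subRI_rhoY : ~ ess_subRI (@rhoY R).
Proof.
move=> /ess_subRI_rhoY_sqrt_bound [c [C [c0 bound]]].
exact: linear_not_dominated_by_sqrt c0 bound.
Qed.

End not_ess_subRI.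

Section ereal_sequences.
Context {R : realType}.
Local Open Scope ereal_scope.

Lemma nneseries_ge_term (t : nat -> \bar R) j : (forall i, 0 <= t i) ->
  t j <= \sum_(i <oo) t i.
Proof.
move=> t0; apply: le_trans (nneseries_lim_ge j.+1 _) => //.
by rewrite big_nat_recr//= leeDr // sume_ge0.
Qed.

Lemma cvg_summable_increments (a : nat -> \bar R) : a 0%N \is a fin_num ->
  \sum_(j <oo) `|a j.+1 - a j| < +oo -> exists L : R, a @ \oo --> L%:E.
Proof.
move=> a0 incr_fin.
have incr_le j : `|a j.+1 - a j| \is a fin_num.
  rewrite ge0_fin_numE//; apply: le_lt_trans incr_fin.
  exact: (@nneseries_ge_term (fun i => `|a i.+1 - a i|)).
have a_fin j : a j \is a fin_num.
  by elim: j => // j ih; have := incr_le j; rewrite abse_fin_num fin_numB => /andP[].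
pose r j := fine (a j); have ar j : a j = (r j)%:E by rewrite /r fineK.
pose D j := (r j.+1 - r j)%R.
have cvgD : cvgn (series D).
  apply: normed_cvg; apply: nnseries_is_cvg => [i|]; first by rewrite normr_ge0.
  apply: le_lt_trans incr_fin; rewrite le_eqVlt; apply/orP; left; apply/eqP.
  by congr (limn _); apply/funext => n; apply: eq_bigr => i _; rewrite !ar -EFinB.
have rE : r = (fun n => series D n + r 0%N)%R.
  by apply/funext => n; rewrite /series /= /D telescope_sumr// subrK.
exists (limn r); apply: cvg_EFin; first by apply: nearW => n; exact: a_fin.
by rewrite (_ : fine \o a = r)// rE; apply: is_cvgD => //; exact: is_cvg_cst.
Qed.

Lemma limn_einf_le_eventually (s : nat -> \bar R) (M : \bar R) N :
  (forall k, (N <= k)%N -> s k <= M) -> limn_einf s <= M.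
Proof.
move=> sM; rewrite limn_einf_lim; apply: lime_le; first exact: is_cvg_einfs.
apply: nearW => m; apply: le_trans (sM (maxn m N) (leq_maxr _ _)).
by apply: ereal_inf_lbound; exists (maxn m N) => //=; rewrite leq_maxl.
Qed.

Lemma lee_abs_fin_sub (a b : \bar R) : b \is a fin_num -> `|b| <= `|a - b| + `|a|.
Proof.
move: a b => [a| |] [b| |] //= _; rewrite ?leey //.
rewrite -EFinD lee_fin -{1}(subKr a b : a - (a - b) = b)%R.
by apply: le_trans (ler_normB _ _) _; rewrite [leRHS]addrC.
Qed.

Lemma cauchy_fast_subseq (rho : nat -> nat -> \bar R) (d : nat -> R) :
  (forall e : R, (0 < e)%R -> exists N : nat, forall m n : nat, (N <= m)%N -> (N <= n)%N ->
      rho n m <= e%:E) ->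
  (forall k, (0 < d k)%R) ->
  exists phi : nat -> nat,
    (forall k, k <= phi k)%N /\ forall k, rho (phi k.+1) (phi k) <= (d k)%:E.
Proof.
move=> cauchy d0; have N_ k := cid (cauchy (d k) (d0 k)).
pose phi k := (\max_(i < k.+1) projT1 (N_ i) + k)%N.
have phi_ge k : (projT1 (N_ k) <= phi k)%N.
  by apply: leq_trans (leq_addr _ _); exact: (@leq_bigmax_cond _ _ (fun i : 'I_k.+1 => _) ord_max).
have phiS k : (phi k <= phi k.+1)%N.
  by apply: leq_add => //; rewrite [X in (_ <= X)%N]big_ord_recr /= leq_maxl.
exists phi; split => [k|k]; first exact: leq_addl.
by apply: (projT2 (N_ k)); [exact: phi_ge | exact: leq_trans (phi_ge k) (phiS k)].
Qed.

End ereal_sequences.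

Section completeness.
Context {R : realType}.
Local Notation T := (LR R).
Local Open Scope ereal_scope.

Lemma nnmf_absf (f : T -> \bar R) : measurable_fun pos f -> supported f -> nnmf (absf f).
Proof.
move=> mf sf; split => [|x _|x npx]; last by rewrite /absf sf ?abse0.
- exact: (@measurableT_comp _ _ _ _ _ _ abse).
- exact: abse_ge0.
Qed.

Lemma nnmf_absf_sub (f g : T -> \bar R) : measurable_fun pos f -> supported f ->
  measurable_fun pos g -> supported g -> nnmf (absf (fun x => f x - g x)).
Proof.
move=> mf sf mg sg; apply: nnmf_absf; first exact: emeasurable_funB.
by move=> x npx; rewrite sf // sg // subee.
Qed.

Lemma nnmfD (f g : T -> \bar R) : nnmf f -> nnmf g -> nnmf (fun x => f x + g x).
Proof.
move=> [mf f0 sf] [mg g0 sg]; split; first exact: emeasurable_funD.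
  by move=> x px; rewrite adde_ge0 ?f0 ?g0.
by move=> x npx; rewrite sf // sg // adde0.
Qed.

Lemma le_rhoY (f g : T -> \bar R) : nnmf f -> nnmf g ->
  (forall x, pos x -> f x <= g x) -> rhoY f <= rhoY g.
Proof.
move=> nf ng fg; apply: rhoY_lub => A hA; apply: le_trans (rhoY_ub g hA).
have [[mfA f0] [mgA _]] := (nnmf_famA nf hA, nnmf_famA ng hA); have [mA Apos _] := hA.
by apply: ge0_le_integral => // x Ax; exact: fg (Apos _ Ax).
Qed.

Lemma rhoY_nneseries_le (w : nat -> T -> \bar R) : (forall j, nnmf (w j)) ->
  rhoY (fun x => \sum_(j <oo) w j x) <= \sum_(j <oo) rhoY (w j).
Proof.
move=> nw; apply: rhoY_lub => A hA; have [mA _ _] := hA.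
have mwA j := (nnmf_famA (nw j) hA).1; have w0 j := (nnmf_famA (nw j) hA).2.
rewrite integral_nneseries //.
by apply: lee_nneseries => [j _ _|j _]; [exact: integral_ge0 (w0 j) | exact: rhoY_ub].
Qed.

Lemma rhoY_fin_num_ae (f : T -> \bar R) : measurable_fun pos f -> rhoY (absf f) < +oo ->
  {ae lam, forall x, pos x -> f x \is a fin_num}.
Proof.
move=> mf rhof; have : lam.-negligible (pos `&` [set x | f x \isn't a fin_num]).
  apply: negligible_pos_famA => A hA; have [mA Apos _] := hA.
  have intf : lam.-integrable A f.
    apply/integrableP; split; first exact: measurable_funS measurable_pos Apos mf.
    exact: le_lt_trans (rhoY_ub _ hA) rhof.
  by apply: negligibleS (integrable_ae mA intf) => x [Ax fx] /(_ Ax); apply/negP.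
by apply: negligibleS => x /not_implyP[px fx]; split => //; apply/negP.
Qed.

Lemma rhoY_le_liminf (h : nat -> T -> \bar R) (f : T -> \bar R) N M :
  (forall k, nnmf (h k)) -> nnmf f ->
  {ae lam, forall x, pos x -> f x = limn_einf (h ^~ x)} ->
  (forall k, (N <= k)%N -> rhoY (h k) <= M) -> rhoY f <= M.
Proof.
move=> nh nf f_liminf hM; apply: rhoY_lub => A hA; have [mA Apos _] := hA.
have mhA k := (nnmf_famA (nh k) hA).1.
have mliminf : measurable_fun A (fun x => limn_einf (h ^~ x)).
  have mNh k := measurableT_comp (@oppe_measurable R setT) (mhA k).
  exact: measurableT_comp (@oppe_measurable R setT) (measurable_fun_limn_esup mNh).
rewrite (ae_eq_integral _ _ mA (nnmf_famA nf hA).1 mliminf); last first.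
  by move: f_liminf; apply: filterS => x fx Ax; exact: fx (Apos _ Ax).
apply: le_trans (fatou lam mA mhA _) _.
  by move=> k x Ax; case: (nnmf_famA (nh k) hA) => _; apply.
apply: (limn_einf_le_eventually (N := N)) => k Nk.
exact: le_trans (rhoY_ub _ hA) (hM k Nk).
Qed.


Lemma ae_cvg_summable_increments (v : nat -> T -> \bar R) :
  (forall k, measurable_fun pos (v k)) -> rhoY (absf (v 0%N)) < +oo ->
  rhoY (fun x => \sum_(j <oo) `|v j.+1 x - v j x|) < +oo ->
  exists f, [/\ measurable_fun pos f, supported f, (forall x, f x \is a fin_num) &
    {ae lam, forall x, pos x -> v ^~ x @ \oo --> f x}].
Proof.
move=> mv v0_fin incr_fin; pose g x := \sum_(j <oo) `|v j.+1 x - v j x|.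
have mg : measurable_fun pos g.
  apply: ge0_emeasurable_sum => [k x _ _|k _]; first exact: abse_ge0.
  exact: measurableT_comp (@abse_measurable _ setT) (emeasurable_funB (mv k.+1) (mv k)).
pose G := pos `&` [set x | v 0%N x \is a fin_num] `&` [set x | g x < +oo].
have Gpos : G `<=` pos by move=> x [[]].
have mG : measurable G.
  have mv0 := emeasurable_fin_num measurable_pos (mv 0%N).
  exact: emeasurable_fun_infty_o mv0 (measurable_funS measurable_pos (@subIsetl _ _ _) mg) _.
have G_ae : {ae lam, forall x, pos x -> G x}.
  have g0 x : 0 <= g x by apply: nneseries_ge0 => j _ _; exact: abse_ge0.
  have absg : absf g = g by apply/funext => x; rewrite /absf gee0_abs.
  have := rhoY_fin_num_ae mg; rewrite absg => /(_ incr_fin) g_fin.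
  apply: filterS2 (rhoY_fin_num_ae (mv 0%N) v0_fin) g_fin => x v0x gx px.
  by split; [split; [|exact: v0x] | rewrite /= -ge0_fin_numE ?gx].
have cvgG x : G x -> exists L : R, v ^~ x @ \oo --> L%:E.
  by move=> [[_ v0x] gx]; exact: cvg_summable_increments.
pose f := (fun x => limn_esup (v ^~ x)) \_ G.
have fG x : G x -> exists L : R, v ^~ x @ \oo --> L%:E /\ f x = L%:E.
  move=> Gx; have [L vL] := cvgG x Gx; exists L; split => //.
  by rewrite /f patchE mem_set // (cvg_limn_einf_sup vL).2.
have f0 x : ~ G x -> f x = 0 by move=> Gx; rewrite /f patchE memNset.
exists f; split.
- apply: measurable_funS measurableT (subsetT _) _.
  apply: ((measurable_restrictT (fun x => limn_esup (v ^~ x)) mG).1).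
  apply: measurable_fun_limn_esup => k.
  exact: measurable_funS measurable_pos Gpos (mv k).
- by move=> x npx; apply: f0 => /Gpos.
- move=> x; have [Gx|nGx] := pselect (G x); last by rewrite f0.
  by have [L [_ ->]] := fG x Gx.
- by apply: filterS G_ae => x xG px; have [L [vL ->]] := fG x (xG px).
Qed.

Lemma rhoY_banach : banach (@rhoY R).
Proof.
move=> u u_in u_cauchy.
have mu k : measurable_fun pos (u k) by case: (u_in k).
have su k : supported (u k) by case: (u_in k).
have d0 k : (0 < 1 / (2 ^ k.+1)%:R :> R)%R by rewrite divr_gt0 // ltr0n expn_gt0.
have [phi [phi_ge phi_fast]] := cauchy_fast_subseq u_cauchy d0.
pose v k := u (phi k).
have incr_fin : rhoY (fun x => \sum_(j <oo) `|v j.+1 x - v j x|) < +oo.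
  apply: le_lt_trans (rhoY_nneseries_le (fun j => nnmf_absf_sub (mu _) (su _) (mu _) (su _))) _.
  apply: le_lt_trans (lee_nneseries _ (fun j _ => phi_fast j)) _ => [j _ _|].
    exact: rhoY_ge0.
  exact: le_lt_trans (epsilon_trick0 xpredT ler01) (ltry 1).
have [f [mf sf f_fin vf]] := ae_cvg_summable_increments (fun k => mu (phi k))
  (let: And3 _ _ rho_v0 := u_in (phi 0%N) in rho_v0) incr_fin.
have dist_f n := nnmf_absf_sub (mu n) (su n) mf sf.
have u_to_f e : (0 < e)%R -> exists N, forall n, (N <= n)%N ->
    rhoY (absf (fun x => u n x - f x)) <= e%:E.
  move=> e0; have [N u_e] := u_cauchy e e0; exists N => n Nn.
  apply: (rhoY_le_liminf (h := fun k => absf (fun x => u n x - v k x)) (N := N)).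
  - by move=> k; exact: nnmf_absf_sub (mu n) (su n) (mu (phi k)) (su (phi k)).
  - exact: dist_f.
  - apply: filterS vf => x vfx px; apply/esym/(cvg_limn_einf_sup _).1.
    apply: cvg_abse; apply: cvgeB; [|exact: cvg_cst|exact: vfx px].
    by rewrite fin_num_adde_defl // fin_numN.
  - by move=> k Nk; apply: u_e => //; exact: leq_trans Nk (phi_ge k).
exists f; split => //; split => //.
have [N uN_f] := u_to_f 1%R ltr01.
have nuN := nnmf_absf (mu N) (su N).
have rho_f : rhoY (absf f) <= rhoY (fun x => absf (fun x => u N x - f x) x + absf (u N) x).
  apply: le_rhoY => [||x _]; [exact: nnmf_absf | exact: nnmfD | exact: lee_abs_fin_sub].
apply: le_lt_trans rho_f _; apply: le_lt_trans (rhoYD_le (dist_f N) nuN) _.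
apply: lte_add_pinfty; first exact: le_lt_trans (uN_f N (leqnn N)) (ltry 1).
by case: (u_in N).
Qed.

End completeness.

Theorem mainTheorem4 (R : realType) :
  [/\ function_norm (@rhoY R), banach (@rhoY R) & ~ ess_subRI (@rhoY R)].
Proof. by split; [exact: rhoY_function_norm | exact: rhoY_banach | exact: not_ess_subRI_rhoY]. Qed.
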